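(* Linear $\mathrm{HTA}_\pm$ are strictly less expressive than two-way linear $\mathrm{HTA}_\pm$: every set of $\Sigma$-trees recognised by a linear $\mathrm{HTA}_\pm$ is recognised by some two-way linear $\mathrm{HTA}_\pm$, but some set of $\Sigma$-trees recognised by a two-way linear $\mathrm{HTA}_\pm$ is not recognised by any linear $\mathrm{HTA}_\pm$.
   Context: Fix a finite set $AP$, $\Sigma=2^{AP}$; $\Sigma$-trees are unranked (finitely many children per node), unordered, leafless trees labelled by $\Sigma$. A two-way $\mathrm{HTA}_\pm$ is $\langle Q,\Sigma,\delta,q_I,F\rangle$, $Q$ finite, $q_I\in Q$, $F\subseteq Q$, $\delta:Q\times\Sigma\times\{\mathit{root},\mathit{nonroot}\}\to\mathcal{B}^+(\{\Diamond_k,\Box_k\}_{k\in\mathbb{N}}\times Q\cup\{\Uparrow\}\times Q)$ (positive Boolean formulae built with $\top,\bot,\land,\lor$; $\Diamond=\Diamond_1,\Box=\Box_1$). A run on $t$ from $s$: tree $r$ labelled in $Q\times\mathrm{Dom}(t)$ with root $(q_I,s)$, each node $x$ labelled $(q,v)$ satisfying $\delta(q,t(v),\rho)$ ($\rho=\mathit{root}$ iff $v$ is the root), where $x\models(\Diamond_k,q')$ iff $x$ has children labelled $(q',v_i)$ for $k$ pairwise distinct children $v_i$ of $v$; $x\models(\Box_k,q')$ iff for all but at most $k-1$ children $v'$ of $v$ some child of $x$ is labelled $(q',v')$; $x\models(\Uparrow,q')$ iff some child of $x$ is labelled $(q',v')$ with $v'$ the parent of $v$. Accepting: every infinite path of $r$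 from its root visits $F$ infinitely often. Recognised language: trees with an accepting run from the root. Hesitant: $Q$ partitioned into totally ordered nonempty components such that transitions from $Q_i$ mention only states in components $Q_j$, $j\le i$, each component being transient (no $Q_i$-atoms in transitions of its states), existential ($Q_i$-atoms only of form $(\Diamond,q')$, at most one per DNF clause), universal (only $(\Box,q')$, at most one per CNF clause), or upward (a singleton $\{q\}$ where $q$ occurs in its own transitions only as $(\Uparrow,q)$). Polarised: existential-component states not in $F$, universal-component states in $F$. Linear: all components are singletons. A (one-way) linear $\mathrm{HTA}_\pm$ is the special case with no atoms $(\Uparrow,q)$ and with $\delta$ not depending on the $\mathit{root}/\mathit{nonroot}$ argument (equivalently $\delta:Q\times\Sigma\to\mathcal{B}^+(\{\Diamond_k,\Box_k\}_{k\in\mathbb{N}}\times Q)$), with components of types transient, existential or universal only. *)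

From mathcomp Require Import all_boot.
From Stdlib Require List.
Set Implicit Arguments. Unset Strict Implicit. Unset Printing Implicit Defensive.

(* A tree over labels S: nodes are sequences of child indices from the root;
   node w has children  rcons w i  for i < arity w. *)
Record tree (S : Type) := Tree { arity : seq nat -> nat; label : seq nat -> S }.

Fixpoint indom_from S (t : tree S) (pre w : seq nat) : bool :=
  match w with
  | [::] => true
  | i :: w' => (i < arity t pre) && indom_from t (rcons pre i) w'
  end.

Definition indom S (t : tree S) (w : seq nat) : bool := indom_from t [::] w.

(* Leafless (finite branching is built in). *)
Definition sigma_tree S (t : tree S) : Prop :=
  forall w, indom t w -> 0 < arity t w.

Definition parent (w : seq nat) : seq nat := take (size w).-1 w.

Inductive atom (Q : Type) :=
| ADia of nat & Q
| ABox of nat & Q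
| AUp of Q.

Definition atom_state Q (a : atom Q) : Q :=
  match a with ADia _ q => q | ABox _ q => q | AUp q => q end.

Inductive pbf (A : Type) :=
| PTrue | PFalse | PAtom of A | PAnd of pbf A & pbf A | POr of pbf A & pbf A.
Arguments PTrue {A}. Arguments PFalse {A}.

Fixpoint atoms A (f : pbf A) : seq A :=
  match f with
  | PTrue | PFalse => [::]
  | PAtom a => [:: a]
  | PAnd g h | POr g h => atoms g ++ atoms h
  end.

Fixpoint psat A (P : A -> Prop) (f : pbf A) : Prop :=
  match f with
  | PTrue => True
  | PFalse => False
  | PAtom a => P a
  | PAnd g h => psat P g /\ psat P h
  | POr g h => psat P g \/ psat P h
  end.

Fixpoint dnf A (f : pbf A) : seq (seq A) :=
  match f with
  | PTrue => [:: [::]]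
  | PFalse => [::]
  | PAtom a => [:: [:: a]]
  | POr g h => dnf g ++ dnf h
  | PAnd g h => [seq c1 ++ c2 | c1 <- dnf g, c2 <- dnf h]
  end.

Fixpoint cnf A (f : pbf A) : seq (seq A) :=
  match f with
  | PTrue => [::]
  | PFalse => [:: [::]]
  | PAtom a => [:: [:: a]]
  | PAnd g h => cnf g ++ cnf h
  | POr g h => [seq c1 ++ c2 | c1 <- cnf g, c2 <- cnf h]
  end.

(* the boolean argument of hdelta is true iff the node is the root *)
Record hta (S : Type) := HTA {
  hQ : finType;
  hdelta : hQ -> S -> bool -> pbf (atom hQ);
  hqI : hQ;
  hF : {set hQ}
}.

(* run trees: nodes are sequences of naturals (arbitrary, possibly infinite,
   branching), domain rdom (prefix closed), labels in Q x Dom(t) *)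
Record run (Q : Type) := Run { rdom : seq nat -> Prop; rlab : seq nat -> Q * seq nat }.

Section Runs.
Variables (S : Type) (A : hta S) (t : tree S).

Definition has_child (r : run (hQ A)) (x : seq nat) (q : hQ A) (v : seq nat) :=
  exists j, rdom r (rcons x j) /\ rlab r (rcons x j) = (q, v).

Definition atom_sat (r : run (hQ A)) (x v : seq nat) (a : atom (hQ A)) : Prop :=
  match a with
  | ADia k q => exists s : seq nat,
      [/\ uniq s, size s = k &
          forall i, i \in s -> i < arity t v /\ has_child r x q (rcons v i)]
  | ABox k q => exists E : seq nat,
      size E < k /\
      forall i, i < arity t v -> i \notin E -> has_child r x q (rcons v i)
  | AUp q => v <> [::] /\ has_child r x q (parent v)
  end.

Definition is_run_from (s : seq nat) (r : run (hQ A)) : Prop :=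
  [/\ rdom r [::],
      (forall x i, rdom r (rcons x i) -> rdom r x),
      rlab r [::] = (hqI A, s) &
      forall x, rdom r x ->
        let: (q, v) := rlab r x in
        indom t v /\ psat (atom_sat r x v) (@hdelta _ A q (label t v) (v == [::]))].

Definition accepting (r : run (hQ A)) : Prop :=
  forall p : nat -> seq nat, p 0 = [::] ->
    (forall n, rdom r (p n.+1) /\ exists j, p n.+1 = rcons (p n) j) ->
    forall m, exists2 n, m <= n & (rlab r (p n)).1 \in hF A.

Definition accepts : Prop :=
  exists r, is_run_from [::] r /\ accepting r.

End Runs.

Definition recognises S (A : hta S) (L : tree S -> Prop) : Prop :=
  forall t, sigma_tree t -> (L t <-> accepts A t).

Inductive ctype := Transient | Existential | Universal | Upward.

(* Components are singletons {q}, totally ordered by an injective rank. *)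
Definition linear_struct S (A : hta S) (allow_up : bool) : Prop :=
  exists (rk : hQ A -> nat) (ty : hQ A -> ctype),
  [/\ injective rk,
      (forall q a b x, List.In x (atoms (@hdelta _ A q a b)) ->
          rk (atom_state x) <= rk q) &
      forall q, match ty q with
      | Transient => forall a b x, List.In x (atoms (@hdelta _ A q a b)) ->
                       atom_state x <> q
      | Existential =>
          q \notin hF A /\
          forall a b,
            (forall x, List.In x (atoms (@hdelta _ A q a b)) ->
               atom_state x = q -> x = ADia 1 q) /\
            (forall c, List.In c (dnf (@hdelta _ A q a b)) ->
               forall x y, List.In x c -> List.In y c ->
                 atom_state x = q -> atom_state y = q -> x = y)
      | Universal =>
          q \in hF A /\
          forall a b,
            (forall x, List.In x (atoms (@hdelta _ A q a b)) ->
               atom_state x = q -> x = ABox 1 q) /\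
            (forall c, List.In c (cnf (@hdelta _ A q a b)) ->
               forall x y, List.In x c -> List.In y c ->
                 atom_state x = q -> atom_state y = q -> x = y)
      | Upward =>
          allow_up /\
          forall a b x, List.In x (atoms (@hdelta _ A q a b)) ->
            atom_state x = q -> x = AUp q
      end].

Definition twoway_linear S (A : hta S) : Prop := linear_struct A true.

Definition oneway_linear S (A : hta S) : Prop :=
  [/\ linear_struct A false,
      (forall q a b q', ~ List.In (AUp q') (atoms (@hdelta _ A q a b))) &
      (forall q a, @hdelta _ A q a true = @hdelta _ A q a false)].

From mathcomp Require Import all_boot zify boolp.
Set Implicit Arguments. Unset Strict Implicit. Unset Printing Implicit Defensive.

(* A one-way linear automaton is in particular a two-way linear one. For strictness, let
   [T n] be the full binary tree whose 0-th children are marked, except that the unmarked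
   nodes at depth [n] have a third child. A two-way automaton can walk down the path on which
   markings alternate and test the arity of its depth-[n] node, so it accepts [T n] iff [n]
   is odd. A one-way automaton reads subtrees independently, and the subtree of [T j.+1] at a
   child of the root reappears in [T j.+2] one level lower; so acceptance from a depth-one node
   of [T j.+2] is determined by the numbers [c q j] of children of such a node accepted from
   each state [q]. Going up the linear order of states, once the counts of all lower states
   are constant, [c q] follows a monotone map on [{0, 1, 2}] and becomes constant as well.
   Hence acceptance of [T n] by a one-way linear automaton is eventually constant in [n]. *)

Lemma psat_mono_in (X : Type) (P P' : X -> Prop) (f : pbf X) :
  (forall a, List.In a (atoms f) -> P a -> P' a) -> psat P f -> psat P' f.
Proof.
elim: f => //= [a | g IHg h IHh | g IHg h IHh] PP'.
- by apply: PP'; left.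
- by case=> Pg Ph; split; [apply: IHg Pg | apply: IHh Ph] => a a_in;
    apply: PP'; apply: List.in_or_app; [left | right].
- by case=> [Pg | Ph]; [left; apply: IHg Pg | right; apply: IHh Ph] => a a_in;
    apply: PP'; apply: List.in_or_app; [left | right].
Qed.

Lemma psat_iff_in (X : Type) (P P' : X -> Prop) (f : pbf X) :
  (forall a, List.In a (atoms f) -> (P a <-> P' a)) -> (psat P f <-> psat P' f).
Proof. by move=> PP'; split; apply: psat_mono_in => a /PP' []. Qed.

Lemma In_allpairs_cat (X : Type) (s t : seq (seq X)) c :
  List.In c [seq c1 ++ c2 | c1 <- s, c2 <- t] ->
  exists c1 c2, [/\ List.In c1 s, List.In c2 t & c = c1 ++ c2].
Proof.
elim: s => //= c1 s IHs /(List.in_app_or _ _ _) [c_in | /IHs [c1' [c2 [? ? ->]]]].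
- exists c1; clear IHs; elim: t c_in => //= c2 t IHt [<- | /IHt [c2' [_ ? ->]]].
  + by exists c2; split=> //; left.
  + by exists c2'; split=> //; [left | right].
- by exists c1', c2; split=> //; right.
Qed.

Lemma atoms_of_cnf (X : Type) (f : pbf X) c x :
  List.In c (cnf f) -> List.In x c -> List.In x (atoms f).
Proof.
elim: f c => [| | a | g IHg h IHh | g IHg h IHh] c //=.
- by case=> // <-.
- by case=> // <-.
- case/(List.in_app_or _ _ _)=> [/IHg sub /sub | /IHh sub /sub] x_in.
  + by apply: List.in_or_app; left.
  + by apply: List.in_or_app; right.
- case/In_allpairs_cat=> c1 [c2 [c1_in c2_in ->]].
  case/(List.in_app_or _ _ _)=> [/(IHg _ c1_in) | /(IHh _ c2_in)] x_in.
  + by apply: List.in_or_app; left.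
  + by apply: List.in_or_app; right.
Qed.

Lemma cnf_clause_unique (X : Type) (f : pbf X) (P : X -> Prop) (a : X) :
  (forall x, List.In x (atoms f) -> P x -> x = a) ->
  forall c, List.In c (cnf f) -> forall x y, List.In x c -> List.In y c -> P x -> P y -> x = y.
Proof.
move=> uniq_a c c_in x y x_in y_in Px Py.
have in_atoms z : List.In z c -> List.In z (atoms f) by apply: atoms_of_cnf c_in.
by rewrite (uniq_a x (in_atoms x x_in) Px) (uniq_a y (in_atoms y y_in) Py).
Qed.

Lemma indom_from_rcons (S : Type) (t : tree S) pre w i :
  indom_from t pre (rcons w i) = indom_from t pre w && (i < arity t (pre ++ w)).
Proof.
elim: w pre => [|j w IH] pre /=; first by rewrite cats0 andbT.
by rewrite IH cat_rcons andbA.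
Qed.

Lemma indom_rcons (S : Type) (t : tree S) w i :
  indom t (rcons w i) = indom t w && (i < arity t w).
Proof. exact: indom_from_rcons. Qed.

Lemma parent_rcons w i : parent (rcons w i) = w.
Proof. by rewrite /parent size_rcons -cats1 take_size_cat. Qed.

Section Runs.
Variables (S : Type) (A : hta S) (t : tree S).

Definition hta_from (q : hQ A) : hta S := HTA (@hdelta _ A) q (hF A).

Definition accepting_run (q : hQ A) (v : seq nat) (r : run (hQ A)) : Prop :=
  @is_run_from _ (hta_from q) t v r /\ @accepting _ (hta_from q) r.

Definition accepts_from (q : hQ A) (v : seq nat) : Prop := exists r, accepting_run q v r.

Lemma accepts_from_init : accepts A t <-> accepts_from (hqI A) [::].
Proof. by []. Qed.

(* [atom_sat t r x v] is [atom_holds (has_child r x) v] by definition. *)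
Definition atom_holds (P : hQ A -> seq nat -> Prop) (v : seq nat) (a : atom (hQ A)) :=
  match a with
  | ADia k q => exists s : seq nat,
      [/\ uniq s, size s = k & forall i, i \in s -> i < arity t v /\ P q (rcons v i)]
  | ABox k q => exists E : seq nat,
      size E < k /\ forall i, i < arity t v -> i \notin E -> P q (rcons v i)
  | AUp q => v <> [::] /\ P q (parent v)
  end.

Lemma atom_holds_mono (P P' : hQ A -> seq nat -> Prop) v a :
  (forall q w, P q w -> P' q w) -> atom_holds P v a -> atom_holds P' v a.
Proof.
move=> PP'; case: a => [k q | k q | q] /=.
- by case=> s [s_uniq s_size s_P]; exists s; split=> // i /s_P [? /PP'].
- by case=> E [E_size E_P]; exists E; split=> // i i_lt /(E_P i i_lt)/PP'.
- by case=> v_nil /PP'.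
Qed.

Lemma psat_atom_holds_mono (P P' : hQ A -> seq nat -> Prop) v f :
  (forall q w, P q w -> P' q w) -> psat (atom_holds P v) f -> psat (atom_holds P' v) f.
Proof. by move=> PP'; apply: psat_mono_in => a _; apply: atom_holds_mono. Qed.

Lemma accepts_from_child q v r j q' w : accepting_run q v r ->
  rdom r [:: j] -> rlab r [:: j] = (q', w) -> accepts_from q' w.
Proof.
move=> [[_ r_closed _ r_node] r_acc] j_dom j_lab.
exists (Run (fun x => rdom r (j :: x)) (fun x => rlab r (j :: x))); split.
- by split=> //= [x i | x]; [apply: (r_closed (j :: x) i) | apply: (r_node (j :: x))].
- move=> p p0 p_step m.
  pose p' n := if n is n'.+1 then j :: p n' else [::].
  have p'_step n : rdom r (p' n.+1) /\ exists i, p' n.+1 = rcons (p' n) i.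
    case: n => [|n] /=; first by rewrite p0; split=> //; exists j.
    by have [dom [i p_i]] := p_step n; split=> //; exists i; rewrite p_i.
  by have [[|n] lt_mn F_n] := r_acc p' erefl p'_step m.+1; last exists n.
Qed.

Lemma accepts_from_unfold q v : accepts_from q v ->
  indom t v /\ psat (atom_holds accepts_from v) (hdelta q (label t v) (v == [::])).
Proof.
move=> [r r_acc]; have [[r_root _ r_lab r_node] _] := r_acc.
have := r_node [::] r_root; rewrite r_lab => -[v_dom v_sat]; split=> //.
apply: psat_atom_holds_mono v_sat => q' w [j [j_dom j_lab]].
exact: accepts_from_child r_acc j_dom j_lab.
Qed.

(* The child [pickle (q', w)] of the root carries the run [R (q', w)]. *)
Definition graft (q : hQ A) (v : seq nat) (R : hQ A * seq nat -> run (hQ A)) :=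
  Run (fun x => if x is j :: x' then
         if (unpickle j : option (hQ A * seq nat)) is Some qw
         then accepts_from qw.1 qw.2 /\ rdom (R qw) x' else False
       else True)
      (fun x => if x is j :: x' then
         if (unpickle j : option (hQ A * seq nat)) is Some qw
         then rlab (R qw) x' else (q, v)
       else (q, v)).

Section Graft.
Variable R : hQ A * seq nat -> run (hQ A).
Hypothesis R_acc : forall qw, accepts_from qw.1 qw.2 -> accepting_run qw.1 qw.2 (R qw).

Lemma graft_is_run q v : indom t v ->
  psat (atom_holds accepts_from v) (hdelta q (label t v) (v == [::])) ->
  @is_run_from _ (hta_from q) t v (graft q v R).
Proof.
move=> v_dom v_sat; split=> //.
- move=> [|j x] i //=; case: (unpickle j) => // qw [qw_acc x_dom]; split=> //.
  by have [[_ R_closed _ _] _] := R_acc qw_acc; apply: R_closed x_dom.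
- move=> [_ | j x] /=.
  + split=> //; apply: psat_atom_holds_mono v_sat => q' w w_acc.
    have [[R_root _ R_lab _] _] := @R_acc (q', w) w_acc.
    by exists (pickle (q', w)); rewrite /= pickleK.
  + case E: (unpickle j) => [qw|] // [qw_acc x_dom].
    have [[_ _ _ R_node] _] := R_acc qw_acc.
    have := R_node x x_dom; case: (rlab (R qw) x) => q' w [w_dom w_sat]; split=> //.
    apply: psat_atom_holds_mono w_sat => q'' w' [i [i_dom i_lab]].
    by exists i; rewrite /= E.
Qed.

Lemma graft_accepting q v : @accepting _ (hta_from q) (graft q v R).
Proof.
move=> p p0 p_step m.
have [dom1 [j p1]] := p_step 0; rewrite p0 /= in p1.
have p_head n : p n.+1 = j :: behead (p n.+1).
  elim: n => [|n IH]; first by rewrite p1.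
  by have [_ [i ->]] := p_step n.+1; rewrite IH.
move: dom1; rewrite p1 /=; case E: (unpickle j) => [qw|] // [qw_acc _].
have [_ R_accepting] := R_acc qw_acc.
have p'0 : behead (p 1) = [::] by rewrite p1.
have p'_step n : rdom (R qw) (behead (p n.+2)) /\
                 exists i, behead (p n.+2) = rcons (behead (p n.+1)) i.
  have [dom [i p_i]] := p_step n.+1.
  move: dom; rewrite p_head /= E => -[_ dom]; split=> //.
  by exists i; rewrite p_i (p_head n).
have [n le_mn F_n] := R_accepting (fun n => behead (p n.+1)) p'0 p'_step m.
by exists n.+1; [apply: leqW | rewrite p_head /= E].
Qed.

End Graft.

Lemma accepts_from_fold q v : indom t v ->
  psat (atom_holds accepts_from v) (hdelta q (label t v) (v == [::])) -> accepts_from q v.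
Proof.
move=> v_dom v_sat.
have R_ex qw : exists r, accepts_from qw.1 qw.2 -> accepting_run qw.1 qw.2 r.
  have [[r r_acc] | not_acc] := pselect (accepts_from qw.1 qw.2); first by exists r.
  by exists (Run (fun _ => False) (fun _ => qw)).
have [R R_acc] := choice R_ex.
by exists (graft q v R); split; [apply: graft_is_run | apply: graft_accepting].
Qed.

Section Coinduction.
Variable P : hQ A -> seq nat -> Prop.
Hypothesis P_post : forall q w, P q w ->
  [/\ q \in hF A, indom t w & psat (atom_holds P w) (hdelta q (label t w) (w == [::]))].

Definition unfolding_run (q : hQ A) (v : seq nat) :=
  Run (fun x => forall j, j \in x ->
         if (unpickle j : option (hQ A * seq nat)) is Some (q', w) then P q' w else False)
      (fun x => odflt (q, v) (unpickle (last (pickle (q, v)) x))).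

Lemma accepts_from_coind q v : P q v -> accepts_from q v.
Proof.
move=> Pqv; set r := unfolding_run q v; exists r.
have lab_P x : rdom r x -> P (rlab r x).1 (rlab r x).2.
  case/lastP: x => [_ | x j dom]; first by rewrite /= pickleK.
  have := dom j; rewrite mem_rcons mem_head /= last_rcons => /(_ isT).
  by case: (unpickle j) => // -[].
have child x q' w : rdom r x -> P q' w -> has_child r x q' w.
  move=> dom Pw; exists (pickle (q', w)); rewrite /= last_rcons pickleK; split=> // j.
  by rewrite mem_rcons inE => /predU1P [-> | /dom]; rewrite ?pickleK.
split; first split.
- by [].
- by move=> x i dom j j_x; apply: dom; rewrite mem_rcons inE j_x orbT.
- by rewrite /= pickleK.
- move=> x dom; have := lab_P x dom; case: (rlab r x) => q' w /P_post [_ w_dom w_sat].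
  by split=> //; apply: psat_atom_holds_mono w_sat => q'' w'; apply: child.
- move=> p p0 p_step m; exists m => //.
  case: m => [|m]; first by rewrite p0 /= pickleK; have [] := P_post Pqv.
  by have [dom _] := p_step m; have [] := P_post (lab_P _ dom).
Qed.

End Coinduction.

End Runs.

Section SubtreeTransfer.
Variables (S : Type) (A : hta S).
Hypothesis no_up : forall q a b q', ~ List.In (AUp q') (atoms (@hdelta _ A q a b)).
Hypothesis root_blind : forall q a, @hdelta _ A q a true = @hdelta _ A q a false.
Variables (t t' : tree S) (v v' : seq nat).
Hypotheses (v_dom : indom t v) (v'_dom : indom t' v').
Hypothesis same_subtree : forall u,
  arity t (v ++ u) = arity t' (v' ++ u) /\ label t (v ++ u) = label t' (v' ++ u).

Lemma indom_subtree u : indom t (v ++ u) = indom t' (v' ++ u).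
Proof.
elim/last_ind: u => [|u i IH]; first by rewrite !cats0 v_dom v'_dom.
by rewrite -!rcons_cat !indom_rcons IH (proj1 (same_subtree u)).
Qed.

Lemma accepts_from_subtree (q : hQ A) : accepts_from t q v -> accepts_from t' q v'.
Proof.
move=> [r [[r_root r_closed r_lab r_node] r_acc]].
have delta_root_blind q1 a b : @hdelta _ A q1 a b = hdelta q1 a false.
  by case: b; rewrite ?root_blind.
(* Only the nodes of [r] all of whose ancestors lie below [v] are kept. *)
pose below x := forall k, prefix v (rlab r (take k x)).2.
pose r' := Run (fun x => rdom r x /\ below x)
               (fun x => ((rlab r x).1, v' ++ drop (size v) (rlab r x).2)).
have below_rcons x j : below (rcons x j) -> below x.
  move=> x_below k; case: (leqP k (size x)) => [le_kx | lt_xk].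
  - by have := x_below k; rewrite -cats1 takel_cat.
  - by have := x_below (size x); rewrite -cats1 take_size_cat // take_oversize // ltnW.
have rcons_below x j : below x -> prefix v (rlab r (rcons x j)).2 -> below (rcons x j).
  move=> x_below v_pre k; case: (leqP k (size x)) => [le_kx | lt_xk].
  - by rewrite -cats1 takel_cat.
  - by rewrite take_oversize // size_rcons.
exists r'; split; first split.
- by split=> // k /=; rewrite r_lab prefix_refl.
- by move=> x i /= [/r_closed x_dom /below_rcons].
- by rewrite /= r_lab /= drop_size cats0.
- move=> x [x_dom x_below] /=.
  have := x_below (size x); rewrite take_size; have := r_node x x_dom.
  case: (rlab r x) => q1 w [w_dom w_sat] /= /prefixP [u w_eq]; subst w.
  rewrite drop_size_cat //; split; first by rewrite -indom_subtree.
  rewrite delta_root_blind (proj2 (same_subtree u)) in w_sat; rewrite delta_root_blind.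
  have child q2 i : has_child r x q2 (rcons (v ++ u) i) -> has_child r' x q2 (rcons (v' ++ u) i).
    move=> [j [j_dom j_lab]]; exists j; rewrite /= j_lab /= !rcons_cat drop_size_cat //.
    by split=> //; split=> //; apply: rcons_below; rewrite // j_lab rcons_cat prefix_prefix.
  apply: psat_mono_in w_sat => -[k q2 | k q2 | q2] a_in /=.
  + case=> s [s_uniq s_size s_ok]; exists s; split=> // i /s_ok [i_lt /child c].
    by rewrite -(proj1 (same_subtree u)).
  + case=> E [E_size E_ok]; exists E; split=> // i i_lt i_E; apply/child/E_ok => //.
    by rewrite (proj1 (same_subtree u)).
  + by case: (no_up a_in).
- move=> p p0 p_step; apply: r_acc p0 _ => n.
  by have [[dom _] step] := p_step n.
Qed.

End SubtreeTransfer.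

Lemma diamond_count (P : nat -> Prop) n k :
  (exists s : seq nat, [/\ uniq s, size s = k & forall i, i \in s -> i < n /\ P i]) <->
  k <= count (fun i => `[< P i >]) (iota 0 n).
Proof.
set L := filter (fun i => `[< P i >]) (iota 0 n).
have mem_L i : (i \in L) = (i < n) && `[< P i >] by rewrite mem_filter mem_iota andbC.
rewrite -size_filter -/L; split.
- case=> s [s_uniq <- s_ok]; apply: uniq_leq_size => // i /s_ok [i_lt /asboolP].
  by rewrite mem_L i_lt => ->.
- move=> le_kL; exists (take k L); split.
  + by rewrite take_uniq // filter_uniq // iota_uniq.
  + by rewrite size_take_min; apply/minn_idPl.
  + by move=> i /mem_take; rewrite mem_L => /andP [? /asboolP].
Qed.

Lemma box_count (P : nat -> Prop) n k :
  (exists E : seq nat, size E < k /\ forall i, i < n -> i \notin E -> P i) <->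
  n - count (fun i => `[< P i >]) (iota 0 n) < k.
Proof.
set C := filter (fun i => ~~ `[< P i >]) (iota 0 n).
have mem_C i : (i \in C) = (i < n) && ~~ `[< P i >] by rewrite mem_filter mem_iota andbC.
have -> : n - count (fun i => `[< P i >]) (iota 0 n) = size C.
  by rewrite size_filter -{1}(size_iota 0 n) -(count_predC (fun i => `[< P i >])) addKn.
split.
- case=> E [E_size E_ok]; apply: leq_ltn_trans E_size; apply: uniq_leq_size.
    by rewrite filter_uniq // iota_uniq.
  move=> i; rewrite mem_C => /andP [i_lt /asboolPn not_Pi].
  by apply: contraT => /(E_ok i i_lt).
- move=> C_size; exists C; split=> // i i_lt.
  by rewrite mem_C i_lt /= negbK => /asboolP.
Qed.

Lemma homo_iter_stable (K x : nat -> nat) (b : nat) :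
  {homo K : m n / m <= n} -> (forall i, x i.+1 = K (x i)) -> (forall i, x i <= b) ->
  forall i, b <= i -> x i = x b.
Proof.
move=> K_homo x_succ x_le.
have fixed_from i : x i.+1 = x i -> forall j, i <= j -> x j = x i.
  move=> x_fix j /subnK <-; elim: (j - i) => // d IH.
  by rewrite addSn x_succ IH -x_succ x_fix.
suff [i le_ib x_fix] : exists2 i, i <= b & x i.+1 = x i.
  by move=> j le_bj; rewrite (fixed_from i x_fix j) ?(fixed_from i x_fix b) ?(leq_trans le_ib).
apply: contrapT => stuck.
have moving i : i <= b -> x i.+1 != x i.
  by move=> le_ib; apply/eqP => x_fix; apply: stuck; exists i.
case/orP: (leq_total (x 0) (x 1)) => [up | down].
- have x_up i : x i <= x i.+1.
    by elim: i => // i IH; rewrite 2!x_succ; apply: K_homo.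
  have x_ge i : i <= b.+1 -> i <= x i.
    elim: i => // i IH lt_ib.
    by have := moving i lt_ib; have := x_up i; have := IH (ltnW lt_ib); lia.
  by have := x_ge b.+1 (leqnn _); have := x_le b.+1; lia.
- have x_down i : x i.+1 <= x i.
    by elim: i => // i IH; rewrite [x i.+2]x_succ [in X in _ <= X]x_succ; apply: K_homo.
  have x_le0 i : i <= b.+1 -> x i + i <= x 0.
    elim: i => [|i IH lt_ib]; first by rewrite addn0.
    by have := moving i lt_ib; have := x_down i; have := IH (ltnW lt_ib); lia.
  by have := x_le0 b.+1 (leqnn _); have := x_le 0; lia.
Qed.

Definition marked (w : seq nat) : bool := last 1 w == 0.

Fixpoint alt (k : nat) : seq nat := if k is k'.+1 then rcons (alt k') (odd k') else [::].

Lemma size_alt k : size (alt k) = k.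
Proof. by elim: k => //= k IH; rewrite size_rcons IH. Qed.

Lemma marked_alt k : marked (alt k) = odd k.
Proof. by case: k => // k; rewrite /marked /= last_rcons; case: (odd k). Qed.

Section Witness.
Variables (AP : finType) (a0 : AP).

Definition mark_label (b : bool) : {set AP} := if b then [set a0] else set0.

Lemma mem_mark_label b : (a0 \in mark_label b) = b.
Proof. by case: b; rewrite ?in_set1 ?in_set0 ?eqxx. Qed.

Definition T (n : nat) : tree {set AP} :=
  Tree (fun w => if (size w == n) && ~~ marked w then 3 else 2)
       (fun w => mark_label (marked w)).

Lemma arity_T_ge2 n w : 2 <= arity (T n) w.
Proof. by rewrite /=; case: ifP. Qed.

Lemma T_sigma n : sigma_tree (T n).
Proof. by move=> w _; apply: leq_trans (arity_T_ge2 n w). Qed.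

Lemma indom_alt n k : indom (T n) (alt k).
Proof.
elim: k => //= k IH; rewrite indom_rcons IH.
by apply: leq_trans (arity_T_ge2 n _); rewrite ltnS leq_b1.
Qed.

Section OneWayLinear.
Variable A : hta {set AP}.
Hypothesis no_up : forall q a b q', ~ List.In (AUp q') (atoms (@hdelta _ A q a b)).
Hypothesis root_blind : forall q a, @hdelta _ A q a true = @hdelta _ A q a false.
Variable rk : hQ A -> nat.
Hypothesis rk_inj : injective rk.
Hypothesis rk_atoms : forall q a b x,
  List.In x (atoms (@hdelta _ A q a b)) -> rk (atom_state x) <= rk q.

Definition accepts_child (q : hQ A) (l j : nat) : Prop := accepts_from (T j.+1) q [:: l].

Definition count_accepted (q : hQ A) (j : nat) : nat :=
  count (fun l => `[< accepts_child q l j >]) (iota 0 2).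

(* Truth of an atom at a node with two children, [c q] of which are accepted from [q]. *)
Definition atom_count (c : hQ A -> nat) (a : atom (hQ A)) : Prop :=
  match a with
  | ADia k q => k <= c q
  | ABox k q => 2 - c q < k
  | AUp _ => False
  end.

Definition step_count (c : hQ A -> nat) (q : hQ A) : nat :=
  count (fun l => `[< psat (atom_count c) (hdelta q (mark_label (l == 0)) false) >]) (iota 0 2).

Lemma accepts_grandchild q l i j : l < 2 -> i < 2 ->
  accepts_from (T j.+2) q [:: l; i] <-> accepts_child q i j.
Proof.
move=> lt_l2 lt_i2.
have li_dom : indom (T j.+2) [:: l; i] by rewrite /indom /= lt_l2 lt_i2.
have i_dom : indom (T j.+1) [:: i] by rewrite /indom /= lt_i2.
by split; apply: accepts_from_subtree.
Qed.

Lemma accepts_child_succ q l j : l < 2 ->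
  accepts_child q l j.+1 <->
  psat (atom_count (count_accepted^~ j)) (hdelta q (mark_label (l == 0)) false).
Proof.
move=> lt_l2.
have l_dom : indom (T j.+2) [:: l] by rewrite /indom /= lt_l2.
have children q' : count (fun i => `[< accepts_from (T j.+2) q' (rcons [:: l] i) >])
    (iota 0 (arity (T j.+2) [:: l])) = count_accepted q' j.
  apply: eq_in_count => i; rewrite mem_iota => /andP [_ lt_i2].
  exact/asbool_equiv_eq/accepts_grandchild.
have sem : psat (atom_holds (T j.+2) (accepts_from (T j.+2)) [:: l])
               (hdelta q (mark_label (l == 0)) false) <->
           psat (atom_count (count_accepted^~ j)) (hdelta q (mark_label (l == 0)) false).
  apply: psat_iff_in => -[k q' | k q' | q'] a_in /=; rewrite -?children.
  - exact: diamond_count.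
  - exact: box_count.
  - by split=> // -[_ _]; apply: no_up a_in.
split=> [/accepts_from_unfold [_ /sem] // | /sem]; exact: accepts_from_fold.
Qed.

Lemma count_accepted_succ q j : count_accepted q j.+1 = step_count (count_accepted^~ j) q.
Proof.
apply: eq_in_count => l; rewrite mem_iota => /andP [_ lt_l2].
exact/asbool_equiv_eq/accepts_child_succ.
Qed.

Lemma step_count_mono c c' q :
  (forall q', c q' <= c' q') -> step_count c q <= step_count c' q.
Proof.
move=> le_cc'; apply: sub_count => l /asboolP sat; apply/asboolP.
apply: psat_mono_in sat => -[k q' | k q' | q'] _ //=.
- by move/leq_trans; apply.
- by apply: leq_ltn_trans; apply: leq_sub2l.
Qed.

Lemma step_count_eq_in c c' q :
  (forall a b x, List.In x (atoms (hdelta q a b)) -> c (atom_state x) = c' (atom_state x)) ->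
  step_count c q = step_count c' q.
Proof.
move=> cc'; apply: eq_count => l; apply: asbool_equiv_eq; apply: psat_iff_in.
by case=> [k q' | k q' | q'] /cc' //= ->.
Qed.

Definition count_stable_from (q : hQ A) (J : nat) : Prop :=
  forall j, J <= j -> count_accepted q j = count_accepted q J.

Lemma count_stable_from_le q J J' : J <= J' -> count_stable_from q J -> count_stable_from q J'.
Proof.
by move=> le_JJ' stable j le_J'j; rewrite (stable j (leq_trans le_JJ' le_J'j)) (stable J' le_JJ').
Qed.

Lemma count_stable_step q J :
  (forall q', rk q' < rk q -> count_stable_from q' J) -> count_stable_from q (J + 2).
Proof.
move=> lower_stable.
(* Below [q] the counts are frozen, so the count of [q] iterates a monotone map on [0, 2]. *)
pose K m := step_count (fun q' => if q' == q then m else count_accepted q' J) q.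
have K_homo : {homo K : m n / m <= n}.
  by move=> m n le_mn; apply: step_count_mono => q'; case: eqP.
have x_succ i : count_accepted q (J + i.+1) = K (count_accepted q (J + i)).
  rewrite addnS count_accepted_succ; apply: step_count_eq_in => a b x x_in.
  case: eqP => [-> // | ne]; apply: lower_stable (leq_addr _ _).
  by rewrite ltn_neqAle (rk_atoms x_in) andbT; apply/eqP => /rk_inj.
have x_le i : count_accepted q (J + i) <= 2.
  by apply: leq_trans (count_size _ _) _; rewrite size_iota.
have stable := @homo_iter_stable K (fun i => count_accepted q (J + i)) 2 K_homo x_succ x_le.
move=> j le_j; rewrite -(subnKC (leq_trans (leq_addr 2 J) le_j)).
by apply: stable; lia.
Qed.

Lemma count_stable_below m : exists J, forall q, rk q < m -> count_stable_from q J.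
Proof.
elim: m => [|m [J stable]]; first by exists 0.
exists (J + 2) => q; rewrite ltnS leq_eqVlt => /orP [/eqP rk_q | lt_qm].
- by apply: count_stable_step => q'; rewrite rk_q; apply: stable.
- exact: count_stable_from_le (leq_addr _ _) (stable q lt_qm).
Qed.

Lemma accepts_T n : accepts A (T n) <-> accepts_child (hqI A) 1 n.
Proof.
apply: iff_trans (accepts_from_init _ _) _.
by split; apply: accepts_from_subtree.
Qed.

Lemma accepts_T_eventually_constant :
  exists N, forall n, N <= n -> (accepts A (T n) <-> accepts A (T N)).
Proof.
have [J stable] := count_stable_below (\max_q rk q).+1.
exists J.+1 => -[// | j] le_Jj.
have counts_j : count_accepted^~ j = count_accepted^~ J.
  by apply: funext => q; exact: stable q (leq_bigmax q) j le_Jj.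
split=> /accepts_T /accepts_child_succ sat; apply/accepts_T/accepts_child_succ => //.
- by rewrite -counts_j; apply: sat.
- by rewrite counts_j; apply: sat.
Qed.

End OneWayLinear.

Definition B_core : pbf (atom (option bool)) :=
  PAnd (PAtom (ABox 2 (Some true))) (PAtom (ABox 1 None)).

(* On [T n], [B] walks down the path [alt], along which markings alternate, and requires
   arity 2 there (through [ABox 2 (Some true)], as only 0-th children are marked); any other
   node is accepted by checking that its parent has the same marking. *)
Definition B_delta (q : option bool) (a : {set AP}) (root : bool) : pbf (atom (option bool)) :=
  match q with
  | Some b => if (a0 \in a) == b then PTrue else PFalse
  | None => if root then B_core else POr (PAtom (AUp (Some (a0 \in a)))) B_core
  end.

Definition B : hta {set AP} := HTA B_delta None setT.

Local Notation accB n := (@accepts_from _ B (T n)).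

Lemma accB_Some n b w : accB n (Some b) w -> marked w = b.
Proof. by case/accepts_from_unfold=> _; rewrite /= mem_mark_label; case: eqP. Qed.

Lemma B_rejects_even n : ~~ odd n -> ~ accepts B (T n).
Proof.
move=> even_n /accepts_from_init acc_root.
have core i : accB n None (alt i) -> psat (atom_holds (T n) (accB n) (alt i)) B_core.
  case: i => [|i] /accepts_from_unfold [_]; first exact: id.
  have -> : (alt i.+1 == [::]) = false by rewrite -size_eq0 size_alt.
  case=> [[_ /accB_Some] | core_sat //].
  rewrite /= parent_rcons mem_mark_label -/(alt i.+1) !marked_alt /=.
  by case: (odd i).
have along i : i <= n -> accB n None (alt i).
  elim: i => // i IH lt_in; have [_ [E [E_size E_ok]]] := core i (IH (ltnW lt_in)).
  case: E E_size E_ok => // _ E_ok.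
  by apply: E_ok; rewrite // (leq_trans _ (arity_T_ge2 n _)) // ltnS leq_b1.
have [[E [E_size E_ok]] _] := core n (along n (leqnn n)).
have arity3 : arity (T n) (alt n) = 3 by rewrite /= size_alt eqxx marked_alt even_n.
have unmarked i : 0 < i -> ~ accB n (Some true) (rcons (alt n) i).
  by move=> i_gt0 /accB_Some; rewrite /marked last_rcons; case: i i_gt0.
have /box_count : exists E, size E < 2 /\
    forall i, i < 3 -> i \notin E -> accB n (Some true) (rcons (alt n) i).
  by exists E; rewrite -arity3.
by rewrite /= (asboolF (unmarked 1 isT)) (asboolF (unmarked 2 isT)); case: asbool.
Qed.

Lemma B_accepts_odd n : odd n -> accepts B (T n).
Proof.
move=> odd_n; apply/accepts_from_init.
have arity_alt k : arity (T n) (alt k) = 2.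
  by rewrite /= size_alt marked_alt; case: eqP => // ->; rewrite odd_n.
pose P (q : hQ B) w := indom (T n) w /\
  if q is Some b then marked w = b
  else w = alt (size w) \/ (w != [::] /\ marked w = marked (parent w)).
apply: (@accepts_from_coind _ B (T n) P); last by split=> //; left.
move=> q w [w_dom Pqw]; split; [exact: in_setT | by [] |].
case: q Pqw => [b <- | [w_alt | [w_nil w_marked]]] /=.
- by rewrite mem_mark_label eqxx.
- suff core : psat (atom_holds (T n) P w) B_core by case: (w == [::]) => //; right.
  move: (size w) w_alt => k ->; split.
  + exists [:: 1]; split=> // -[|[|i]] //; rewrite arity_alt // => _ _.
    by split; rewrite ?indom_rcons ?indom_alt ?arity_alt // /marked last_rcons.
  + exists [::]; split=> // i lt_i2 _.
    rewrite arity_alt in lt_i2; split; first by rewrite indom_rcons indom_alt arity_alt.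
    case: (eqVneq i (odd k)) => [-> | ne]; first by left; rewrite size_rcons size_alt.
    right; rewrite -size_eq0 size_rcons parent_rcons marked_alt /marked last_rcons.
    by split=> //; case: i lt_i2 ne => [|[|]] //; case: (odd k).
- rewrite (negbTE w_nil); left; split; first exact/eqP.
  rewrite mem_mark_label w_marked; split=> //.
  by case/lastP: w w_dom w_nil {w_marked} => // w i; rewrite parent_rcons indom_rcons => /andP [].
Qed.

Lemma B_accepts_T n : accepts B (T n) <-> odd n.
Proof.
by split=> [acc | /B_accepts_odd //]; apply: contraT => /B_rejects_even /(_ acc).
Qed.

Lemma B_twoway_linear : twoway_linear B.
Proof.
exists (fun q => if q is Some b then nat_of_bool b else 2).
exists (fun q => if q is Some _ then Transient else Universal); split.
- by case=> [[]|] [[]|].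
- case=> [b | ] a r x /=; first by case: ifP.
  by move=> _; case: (atom_state x) => [[]|].
- case=> [b | ] /=; first by move=> a r x; case: ifP.
  split; first by rewrite in_setT.
  move=> a r; have self_atom : forall x, List.In x (atoms (B_delta None a r)) ->
      atom_state x = None -> x = ABox 1 None.
    by case: r => /= x; do ?case=> [<- // | ]; case.
  by split=> //; apply: cnf_clause_unique self_atom.
Qed.

End Witness.

Lemma linear_struct_allow_up (S : Type) (A : hta S) :
  linear_struct A false -> linear_struct A true.
Proof.
case=> rk [ty [rk_inj rk_atoms ty_ok]]; exists rk, ty; split=> // q.
by move: (ty_ok q); case: (ty q) => //; case.
Qed.

Theorem corollary5p6 (AP : finType) (HAP : 0 < #|AP|) :
  (forall A : hta {set AP}, oneway_linear A ->
     exists B : hta {set AP}, twoway_linear B /\ recognises B (accepts A))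
  /\
  (exists B : hta {set AP}, twoway_linear B /\
     forall A : hta {set AP}, oneway_linear A -> ~ recognises A (accepts B)).
Proof.
split.
- move=> A [A_linear _ _]; exists A; split; last by move=> t _.
  exact: linear_struct_allow_up.
- have [a0 _] := card_gt0P HAP.
  exists (B a0); split; first exact: B_twoway_linear.
  move=> A [[rk [_ [rk_inj rk_atoms _]]] no_up root_blind] recA.
  have [N const] := accepts_T_eventually_constant a0 no_up root_blind rk_inj rk_atoms.
  have acc_odd n : accepts A (T a0 n) <-> odd n.
    exact: iff_trans (iff_sym (recA _ (@T_sigma _ a0 n))) (B_accepts_T a0 n).
  have le_N : N <= N.*2.+1 by rewrite -addnn; lia.
  have /acc_odd : accepts A (T a0 N.*2.+2).
    by apply/(const _ (leqW le_N))/(const _ le_N)/acc_odd; rewrite /= odd_double.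
  by rewrite /= odd_double.
Qed.
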